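(* Let $M$ be a nondegenerate $R$-lattice that is primitively $n$-universal. Then the Witt index of the quadratic space $FM$ satisfies $\operatorname{ind} FM \ge n$. In particular, $u^\ast_R(n) \ge 2n$.
   Context: $F$ is a nonarchimedean local field of characteristic not $2$ with ring of integers $R$. An $R$-lattice is a finitely generated $R$-submodule $L$ of a quadratic space $(V,B)$ over $F$, assumed integral ($B(L,L)\subseteq R$); $FL$ denotes the $F$-space spanned by $L$. A representation of $L$ into $M$ is an $R$-linear map preserving $B$; it is primitive if its image is a direct summand of $M$. An $R$-lattice is primitively $n$-universal if it primitively represents every $R$-lattice of rank $n$. The Witt index $\operatorname{ind} V$ of a nondegenerate space is the dimension of a maximal totally isotropic subspace. $u^\ast_R(n)$ is the minimal rank of a primitively $n$-universal $R$-lattice. *)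

From HB Require Import structures.
From mathcomp Require Import all_boot all_order all_algebra.
From mathcomp Require Import boolp.
Set Implicit Arguments. Unset Strict Implicit. Unset Printing Implicit Defensive.
Import Order.TTheory GRing.Theory Num.Theory.
Local Open Scope ring_scope.

Section LocalField.
Variable F : fieldType.
(* v is a normalized discrete valuation on F^x (its value at 0 is irrelevant). *)
Variable v : F -> int.

Definition discrete_valuation : Prop :=
  [/\ (forall x y : F, x != 0 -> y != 0 -> v (x * y) = v x + v y),
      (forall x y : F, x != 0 -> y != 0 -> x + y != 0 ->
          (v x <= v (x + y)) || (v y <= v (x + y)))
    & (exists pi : F, pi != 0 /\ v pi = 1)].

Definition vring : pred F := fun x => (x == 0) || (0 <= v x).

Definition vsmall (e : int) (x : F) : Prop := x = 0 \/ e <= v x.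

Definition vcomplete : Prop :=
  forall a : nat -> F,
    (forall e : int, exists N : nat, forall p q, (N <= p)%N -> (N <= q)%N ->
        vsmall e (a p - a q)) ->
    exists l : F, forall e : int, exists N : nat, forall p, (N <= p)%N ->
        vsmall e (a p - l).

Definition finite_residue_field : Prop :=
  exists s : seq F, all vring s /\
    forall x, x \in vring -> exists2 y, y \in s & vsmall 1 (x - y).

Definition nonarch_local_field : Prop :=
  [/\ discrete_valuation, vcomplete & finite_residue_field].
End LocalField.

Section Lattices.
Variable F : fieldType.
Variable v : F -> int.

(* A quadratic space of dimension m over F: 'rV[F]_m with the symmetric
   bilinear form B(x,y) = x G y^T, G^T = G. *)
Definition bform m (G : 'M[F]_m) (x y : 'rV[F]_m) : F := (x *m G *m y^T) 0 0.

Definition lattice k m (A : 'M[F]_(k, m)) (x : 'rV[F]_m) : Prop :=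
  exists u : 'rV[F]_k, (forall i, u 0 i \in vring v) /\ x = u *m A.

(* rank of the lattice = dim F L = rank of A *)
Definition lrank k m (A : 'M[F]_(k, m)) : nat := \rank A.

Definition integral_lattice m (G : 'M[F]_m) k (A : 'M[F]_(k, m)) : Prop :=
  forall x y, lattice A x -> lattice A y -> bform G x y \in vring v.

Definition nondeg_lattice m (G : 'M[F]_m) k (A : 'M[F]_(k, m)) : Prop :=
  forall x : 'rV[F]_m, (x <= A)%MS ->
    (forall y : 'rV[F]_m, (y <= A)%MS -> bform G x y = 0) -> x = 0.

Definition rsubmodule m (N : 'rV[F]_m -> Prop) : Prop :=
  [/\ N 0, (forall x y, N x -> N y -> N (x + y))
    & (forall a x, a \in vring v -> N x -> N (a *: x))].

Definition direct_summand m (S M : 'rV[F]_m -> Prop) : Prop :=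
  exists N : 'rV[F]_m -> Prop,
    [/\ rsubmodule N, (forall x, N x -> M x),
        (forall x, M x -> exists a b, [/\ S a, N b & x = a + b])
      & (forall x, S x -> N x -> x = 0)].

Definition representation m' (G' : 'M[F]_m') k' (A : 'M[F]_(k', m'))
    m (G : 'M[F]_m) k (C : 'M[F]_(k, m)) (f : 'rV[F]_m' -> 'rV[F]_m) : Prop :=
  [/\ (forall x, lattice A x -> lattice C (f x)),
      (forall x y, lattice A x -> lattice A y -> f (x + y) = f x + f y),
      (forall a x, a \in vring v -> lattice A x -> f (a *: x) = a *: f x)
    & (forall x y, lattice A x -> lattice A y -> bform G (f x) (f y) = bform G' x y)].

Definition image_on m' m (L : 'rV[F]_m' -> Prop) (f : 'rV[F]_m' -> 'rV[F]_m)
  (y : 'rV[F]_m) : Prop := exists2 x, L x & y = f x.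

Definition prim_represents m' (G' : 'M[F]_m') k' (A : 'M[F]_(k', m'))
    m (G : 'M[F]_m) k (C : 'M[F]_(k, m)) : Prop :=
  exists f, representation G' A G C f /\
            direct_summand (image_on (lattice A) f) (lattice C).

Definition prim_n_universal (n : nat) m (G : 'M[F]_m) k (C : 'M[F]_(k, m)) : Prop :=
  forall m' (G' : 'M[F]_m') k' (A : 'M[F]_(k', m')),
    G'^T = G' -> integral_lattice G' A -> lrank A = n ->
    prim_represents G' A G C.
End Lattices.

(* Witt index of the space FM = rowspace of C with form G: the largest
   dimension of a totally isotropic subspace (represented as the row space
   of a square matrix W). *)
Definition witt_index (F : fieldType) m (G : 'M[F]_m) k (C : 'M[F]_(k, m)) : nat :=
  \max_(d < m.+1 | `[< exists W : 'M[F]_m,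
          [/\ (W <= C)%MS, W *m G *m W^T = 0 & \rank W = d] >]) d.

(** For every t, primitive n-universality yields a primitive representation
    of R^n with Gram matrix pi^t I_n, given by an integral n x k matrix U_t of
    coefficients on the generators C of M.  Since R is complete with finite
    residue field, the U_t accumulate at some w.  The row space of Y = w C is
    totally isotropic, because its Gram matrix is congruent to pi^t I, hence to
    0, modulo arbitrarily high powers of pi.  Y has rank n: a primitive vector
    a with a Y = 0 would give a U_t C in pi M for U_t close to w, and primitivity
    of the representation would then force a into pi R^n.  Hence ind FM >= n,
    and nondegeneracy gives dim FM >= 2 ind FM. *)

From HB Require Import structures.
From mathcomp Require Import all_boot all_order all_algebra boolp.
From mathcomp Require Import zify ring.
Import Order.TTheory GRing.Theory Num.Theory.
Set Implicit Arguments. Unset Strict Implicit.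
Local Open Scope ring_scope.

Section Valuation.
Variables (F : fieldType) (v : F -> int).
Hypothesis vM : forall {x y : F}, x != 0 -> y != 0 -> v (x * y) = v x + v y.
Hypothesis vD : forall {x y : F}, x != 0 -> y != 0 -> x + y != 0 ->
  (v x <= v (x + y)) || (v y <= v (x + y)).
Variables (pi : F) (pi0 : pi != 0) (vpi : v pi = 1).

Lemma valuation1 : v 1 = 0.
Proof. by apply/(addrI (v 1)); rewrite addr0 -vM ?oner_neq0 ?mulr1. Qed.

Lemma valuationN x : v (- x) = v x.
Proof.
have [->|x0] := eqVneq x 0; first by rewrite oppr0.
have N10 : (-1 : F) != 0 by rewrite oppr_eq0 oner_neq0.
have vN1 : v (-1) = 0 by have := vM N10 N10; rewrite mulrNN mulr1 valuation1; lia.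
by rewrite -mulN1r vM // vN1 add0r.
Qed.

Lemma valuationV x : x != 0 -> v x^-1 = - v x.
Proof. by move=> x0; apply/(addrI (v x)); rewrite -vM ?invr_neq0 // mulfV // valuation1 subrr. Qed.

Lemma valuation_piX j : v (pi ^+ j) = j%:Z.
Proof.
elim: j => [|j IH]; first by rewrite expr0 valuation1.
by rewrite exprS vM ?expf_neq0 // IH vpi -addn1 PoszD addrC.
Qed.

Lemma vsmallD e x y : vsmall v e x -> vsmall v e y -> vsmall v e (x + y).
Proof.
case=> [->|hx]; first by rewrite add0r.
case=> [->|hy]; first by rewrite addr0; right.
have [->|x0] := eqVneq x 0; first by rewrite add0r; right.
have [->|y0] := eqVneq y 0; first by rewrite addr0; right.
have [|s0] := eqVneq (x + y) 0; first by left.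
by right; case/orP: (vD x0 y0 s0); apply: le_trans.
Qed.

Lemma vsmallN e x : vsmall v e x -> vsmall v e (- x).
Proof. by case=> [->|h]; [left; rewrite oppr0|right; rewrite valuationN]. Qed.

Lemma vsmallW e e' x : e' <= e -> vsmall v e x -> vsmall v e' x.
Proof. by move=> le [->|h]; [left|right; apply: le_trans h]. Qed.

Lemma vsmallM e e' x y : vsmall v e x -> vsmall v e' y -> vsmall v (e + e') (x * y).
Proof.
case=> [->|hx]; first by rewrite mul0r; left.
case=> [->|hy]; first by rewrite mulr0; left.
have [->|x0] := eqVneq x 0; first by rewrite mul0r; left.
have [->|y0] := eqVneq y 0; first by rewrite mulr0; left.
by right; rewrite vM // lerD.
Qed.

Lemma vringE x : (x \in vring v) <-> vsmall v 0 x.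
Proof.
rewrite /vsmall unfold_in /vring; split; first by case/orP => [/eqP|]; [left|right].
by case=> [->|->]; rewrite ?eqxx ?orbT.
Qed.

Lemma vringD x y : x \in vring v -> y \in vring v -> x + y \in vring v.
Proof. by move=> /vringE hx /vringE hy; apply/vringE/vsmallD. Qed.

Lemma vringN x : x \in vring v -> - x \in vring v.
Proof. by move=> /vringE hx; apply/vringE/vsmallN. Qed.

Lemma vringM x y : x \in vring v -> y \in vring v -> x * y \in vring v.
Proof. by move=> /vringE hx /vringE hy; apply/vringE; rewrite -(addr0 0); apply: vsmallM. Qed.

Lemma vring0 : 0 \in vring v. Proof. by apply/vringE; left. Qed.

Lemma vring1 : 1 \in vring v. Proof. by apply/vringE; right; rewrite valuation1. Qed.

Lemma vring_piX j : pi ^+ j \in vring v.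
Proof. by apply/vringE; right; rewrite valuation_piX. Qed.

Lemma vring_pi : pi \in vring v. Proof. by rewrite -[pi]expr1 vring_piX. Qed.

Lemma vsmall_piX j x : vsmall v j%:Z x <-> exists2 r, r \in vring v & x = pi ^+ j * r.
Proof.
have pj0 : pi ^+ j != 0 by rewrite expf_neq0.
split=> [|[r /vringE hr ->]]; last first.
  by rewrite -(addr0 j%:Z); apply: vsmallM => //; right; rewrite valuation_piX.
case=> [->|hx]; first by exists 0; rewrite ?vring0 ?mulr0.
have [->|x0] := eqVneq x 0; first by exists 0; rewrite ?vring0 ?mulr0.
exists (pi ^- j * x); last by rewrite mulVKf.
by apply/vringE; right; rewrite vM ?invr_neq0 // valuationV // valuation_piX addrC subr_ge0.
Qed.

Lemma vsmall_all_eq0 x : (forall j : nat, vsmall v j%:Z x) -> x = 0.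
Proof.
move=> h; have [//|x0] := eqVneq x 0.
by case: (h (absz (v x + 1))) => // hv; exfalso; move: hv; lia.
Qed.

Lemma pi_mul_neq1 b : b \in vring v -> pi * b != 1.
Proof.
move=> /vringE [->|hb]; first by rewrite mulr0 eq_sym oner_neq0.
have [->|b0] := eqVneq b 0; first by rewrite mulr0 eq_sym oner_neq0.
by apply: contraTneq hb => pib1; move: (vM pi0 b0); rewrite pib1 valuation1 vpi; lia.
Qed.

Definition integral_mx p q (A : 'M[F]_(p, q)) := forall i l, A i l \in vring v.

Definition mx_eqmod p q (j : nat) (A B : 'M[F]_(p, q)) :=
  forall i l, vsmall v j%:Z (A i l - B i l).

Lemma mx_eqmod_trans p q j (A B D : 'M[F]_(p, q)) :
  mx_eqmod j A B -> mx_eqmod j B D -> mx_eqmod j A D.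
Proof.
move=> hAB hBD i l; have -> : A i l - D i l = (A i l - B i l) + (B i l - D i l) by ring.
exact: vsmallD.
Qed.

Lemma mx_eqmod_sym p q j (A B : 'M[F]_(p, q)) : mx_eqmod j A B -> mx_eqmod j B A.
Proof. by move=> h i l; rewrite -opprB; apply: vsmallN. Qed.

Lemma mx_eqmodW p q j j' (A B : 'M[F]_(p, q)) :
  (j' <= j)%N -> mx_eqmod j A B -> mx_eqmod j' A B.
Proof. by move=> le h i l; apply: vsmallW (h i l); rewrite lez_nat. Qed.

Lemma mx_eqmod_decomp p q j (A B : 'M[F]_(p, q)) :
  mx_eqmod j A B -> exists2 D, integral_mx D & B = A + pi ^+ j *: D.
Proof.
move=> h; have pj0 : pi ^+ j != 0 by rewrite expf_neq0.
exists (pi ^- j *: (B - A)); last by rewrite scalerA mulfV // scale1r addrC subrK.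
move=> i l; rewrite !mxE; have := vsmallN (h i l).
by rewrite opprB => /vsmall_piX [r hr ->]; rewrite mulKf.
Qed.

Section Compactness.
Hypothesis Hres : finite_residue_field v.
Hypothesis Hcomp : vcomplete v.

Lemma residue_reps_piX j : exists s : seq F, all (vring v) s /\
  forall x, x \in vring v -> exists2 y, y \in s & vsmall v j%:Z (x - y).
Proof.
elim: j => [|j [sj [hsj Hsj]]].
  exists [:: 0]; split=> [|x hx]; first by rewrite /= andbT; apply: vring0.
  by exists 0; rewrite ?mem_seq1 // subr0; apply/vringE.
case: Hres => s [hs Hs].
exists [seq a + pi ^+ j * d | a <- sj, d <- s]; split.
  apply/allP => _ /allpairsP [[a d] [/= ha hd ->]].
  by apply: vringD; [exact: (allP hsj)|apply: vringM; [exact: vring_piX|exact: (allP hs)]].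
move=> x hx; have [a ha /vsmall_piX [r hr exr]] := Hsj x hx.
have [d hd hrd] := Hs r hr.
exists (a + pi ^+ j * d); first exact: (allpairs_f (fun a d => a + pi ^+ j * d)).
have -> : x - (a + pi ^+ j * d) = pi ^+ j * (r - d) by rewrite mulrBr -exr; ring.
by rewrite -addn1 PoszD; apply: vsmallM => //; right; rewrite valuation_piX.
Qed.

Lemma vcauchy_limit (a : nat -> F) :
  (forall j, vsmall v j%:Z (a j - a j.+1)) ->
  exists l, forall j, vsmall v j%:Z (a j - l).
Proof.
move=> ha; have chain q d : vsmall v q%:Z (a q - a (q + d)%N).
  elim: d => [|d IH]; first by rewrite addn0 subrr; left.
  have -> : a q - a (q + d.+1)%N = (a q - a (q + d)%N) + (a (q + d)%N - a (q + d).+1).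
    by rewrite addnS; ring.
  by apply: vsmallD IH (vsmallW _ (ha _)); rewrite lez_nat leq_addr.
have [l Hl] : exists l, forall e : int, exists N : nat, forall p, (N <= p)%N ->
    vsmall v e (a p - l).
  apply: Hcomp => e; exists (absz e).
  have small p q : (absz e <= p)%N -> (p <= q)%N -> vsmall v e (a p - a q).
    by move=> ep pq; rewrite -(subnKC pq); apply: vsmallW (chain _ _); lia.
  move=> p q hp hq; have [pq|/ltnW qp] := leqP p q; first exact: small.
  by rewrite -opprB; apply/vsmallN/small.
exists l => j; have [N HN] := Hl j%:Z.
have -> : a j - l = (a j - a (j + N)%N) + (a (j + N)%N - l) by ring.
exact: vsmallD (chain j N) (HN _ (leq_addl _ _)).
Qed.

Lemma mx_cauchy_limit p q (c : nat -> 'M[F]_(p, q)) :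
  (forall j, mx_eqmod j (c j) (c j.+1)) -> exists w, forall j, mx_eqmod j (c j) w.
Proof.
move=> hc; have /fin_all_exists [L HL] : forall x : 'I_p * 'I_q,
    exists l, forall j, vsmall v j%:Z (c j x.1 x.2 - l).
  by move=> [i l]; apply: vcauchy_limit => j; apply: hc.
by exists (\matrix_(i, l) L (i, l)) => j i l; rewrite mxE; apply: HL (i, l) j.
Qed.

Lemma infinite_pigeonhole (T : finType) (Q : T -> nat -> Prop) :
  (forall N, exists t, (N <= t)%N /\ exists g, Q g t) ->
  exists g, forall N, exists t, (N <= t)%N /\ Q g t.
Proof.
move=> H; apply: contrapT => noQ.
have /fin_all_exists [Nf HN] : forall g, exists N, forall t, (N <= t)%N -> ~ Q g t.
  move=> g; apply: contrapT => H2; apply: noQ; exists g => N.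
  apply: contrapT => H3; apply: H2; exists N => t Nt Qt.
  exact: H3 (ex_intro _ t (conj Nt Qt)).
have [t [Nt [g Qg]]] := H (\max_g Nf g).
exact: HN g t (leq_trans (leq_bigmax g) Nt) Qg.
Qed.

Variables (p q : nat) (U : nat -> 'M[F]_(p, q)).
Hypothesis U_integral : forall t, integral_mx (U t).

Definition cluster_mod j (c : 'M[F]_(p, q)) :=
  forall N, exists t, (N <= t)%N /\ mx_eqmod j (U t) c.

Lemma cluster_mod0 : cluster_mod 0 0.
Proof. by move=> N; exists N; split=> // i l; rewrite mxE subr0; apply/vringE/U_integral. Qed.

Lemma cluster_mod_refine j c : cluster_mod j c ->
  exists c', cluster_mod j.+1 c' /\ mx_eqmod j c c'.
Proof.
move=> hc; have [s [_ Hs]] := residue_reps_piX j.+1.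
pose rep (g : {ffun 'I_p * 'I_q -> 'I_(size s)}) : 'M[F]_(p, q) :=
  \matrix_(i, l) nth 0 s (g (i, l)).
have [g Hg] : exists g, forall N, exists t, (N <= t)%N /\
    mx_eqmod j (U t) c /\ mx_eqmod j.+1 (U t) (rep g).
  apply: infinite_pigeonhole => N; have [t [Nt ct]] := hc N; exists t; split => //.
  have /fin_all_exists [g hg] : forall x : 'I_p * 'I_q, exists o : 'I_(size s),
      vsmall v j.+1%:Z (U t x.1 x.2 - nth 0 s o).
    move=> [i l]; have [y ys hy] := Hs _ (U_integral t i l).
    by exists (Ordinal (etrans (index_mem y s) ys)); rewrite /= nth_index.
  by exists (finfun g); split=> // i l; rewrite mxE ffunE; apply: (hg (i, l)).
exists (rep g); split=> [N|]; first by have [t [Nt [_ h]]] := Hg N; exists t.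
have [t [_ [h1 h2]]] := Hg 0%N.
exact: mx_eqmod_trans (mx_eqmod_sym h1) (mx_eqmodW (leqnSn j) h2).
Qed.

Lemma cluster_mod_chain : exists c : nat -> 'M[F]_(p, q),
  forall j, cluster_mod j (c j) /\ mx_eqmod j (c j) (c j.+1).
Proof.
pose X := {jc : nat * 'M[F]_(p, q) | cluster_mod jc.1 jc.2}.
have next (x : X) : {y : X | (sval y).1 = (sval x).1.+1 /\
    mx_eqmod (sval x).1 (sval x).2 (sval y).2}.
  case: x => [[j c] /= hc]; have /cid [c' [hc' cc']] := cluster_mod_refine hc.
  by exists (exist _ (j.+1, c') hc').
have [f [f0 Rf]] := dependent_choice next (exist _ (0%N, 0) cluster_mod0).
have fj j : (sval (f j)).1 = j.
  by elim: j => [|j IH]; rewrite ?f0 // (proj1 (Rf j)) IH.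
exists (fun j => (sval (f j)).2) => j; split; first by have := svalP (f j); rewrite fj.
by have [_] := Rf j; rewrite fj.
Qed.

Lemma cluster_limit : exists w : 'M[F]_(p, q),
  forall j N, exists t, (N <= t)%N /\ mx_eqmod j (U t) w.
Proof.
have [c Hc] := cluster_mod_chain.
have [w Hw] := mx_cauchy_limit (fun j => proj2 (Hc j)).
exists w => j N; have [t [Nt ct]] := proj1 (Hc j) N.
by exists t; split=> //; apply: mx_eqmod_trans ct (Hw j).
Qed.

End Compactness.

Lemma integral_mxD p q (A B : 'M[F]_(p, q)) :
  integral_mx A -> integral_mx B -> integral_mx (A + B).
Proof. by move=> hA hB i l; rewrite mxE; apply: vringD. Qed.

Lemma integral_mxN p q (A : 'M[F]_(p, q)) : integral_mx A -> integral_mx (- A).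
Proof. by move=> hA i l; rewrite mxE; apply: vringN. Qed.

Lemma integral_mxZ p q c (A : 'M[F]_(p, q)) :
  c \in vring v -> integral_mx A -> integral_mx (c *: A).
Proof. by move=> hc hA i l; rewrite mxE; apply: vringM. Qed.

Lemma integral_mxM p q r (A : 'M[F]_(p, q)) (B : 'M[F]_(q, r)) :
  integral_mx A -> integral_mx B -> integral_mx (A *m B).
Proof.
move=> hA hB i l; rewrite mxE; apply: (big_ind (fun x => x \in vring v)).
- exact: vring0.
- exact: vringD.
- by move=> j _; apply: vringM.
Qed.

Lemma integral_mx_row p q (A : 'M[F]_(p, q)) i : integral_mx A -> integral_mx (row i A).
Proof. by move=> hA i' l; rewrite mxE. Qed.

Lemma integral_mx_scalar p c : c \in vring v -> integral_mx (c%:M : 'M[F]_p).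
Proof. by move=> hc i l; rewrite mxE; case: (i == l); rewrite ?mulr1n ?mulr0n ?vring0. Qed.

Lemma latticeP k m (C : 'M[F]_(k, m)) x :
  lattice v C x <-> exists2 u : 'rV_k, integral_mx u & x = u *m C.
Proof.
split=> [[u [hu ->]]|[u hu ->]]; last by exists u; split=> // i; apply: hu.
by exists u => // i l; rewrite (ord1 i).
Qed.

Lemma lattice_mul k m (C : 'M[F]_(k, m)) (u : 'rV_k) :
  integral_mx u -> lattice v C (u *m C).
Proof. by move=> hu; apply/latticeP; exists u. Qed.

Lemma lattice1 p (x : 'rV[F]_p) : lattice v 1%:M x <-> integral_mx x.
Proof.
split=> [/latticeP [u hu ->]|hx]; first by rewrite mulmx1.
by apply/latticeP; exists x; rewrite ?mulmx1.
Qed.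

Lemma lattice_rsubmodule k m (C : 'M[F]_(k, m)) : rsubmodule v (lattice v C).
Proof.
split=> [|_ _ /latticeP [u hu ->] /latticeP [u' hu' ->]|a _ ha /latticeP [u hu ->]].
- by rewrite -(mul0mx _ C); apply: lattice_mul => i l; rewrite mxE vring0.
- by rewrite -mulmxDl; apply/lattice_mul/integral_mxD.
- by rewrite scalemxAl; apply/lattice_mul/integral_mxZ.
Qed.

Lemma direct_summand_scale m (S M : 'rV[F]_m -> Prop) c z :
  rsubmodule v S -> direct_summand v S M -> c \in vring v -> M z -> S (c *: z) ->
  exists2 s, S s & c *: z = c *: s.
Proof.
move=> [_ SD SZ] [N [[_ _ NZ] _ Mdec SN0]] hc Mz.
have [s [nn [Ss Nn ->]]] := Mdec z Mz => Scz.
exists s => //; suff cn0 : c *: nn = 0 by rewrite scalerDr cn0 addr0.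
apply: SN0; last exact: NZ.
have -> : c *: nn = c *: (s + nn) + (-1) *: (c *: s).
  by rewrite scalerDr scaleN1r addrAC subrr add0r.
by apply: SD => //; apply: (SZ); [apply/vringN/vring1|exact: SZ].
Qed.

Lemma entry_bform m (G : 'M[F]_m) p q (P : 'M[F]_(p, m)) (Q : 'M[F]_(q, m)) i l :
  (P *m G *m Q^T) i l = bform G (row i P) (row l Q).
Proof. by rewrite /bform -row_mul !mxE; apply: eq_bigr => j _; rewrite !mxE. Qed.

Section Representation.
Variables (n m : nat) (G' : 'M[F]_n) (G : 'M[F]_m) (k : nat) (C : 'M[F]_(k, m)).
Variable f : 'rV[F]_n -> 'rV[F]_m.
Hypothesis frep : representation v G' 1%:M G C f.

Lemma representation0 : f 0 = 0.
Proof.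
case: frep => _ fD _ _; have L0 : lattice v 1%:M (0 : 'rV[F]_n).
  by case: (lattice_rsubmodule (1%:M : 'M[F]_n)).
by apply: (addrI (f 0)); rewrite -fD // !addr0.
Qed.

Lemma image_rsubmodule : rsubmodule v (image_on (lattice v 1%:M) f).
Proof.
case: frep => _ fD fZ _; have [L0 LD LZ] := lattice_rsubmodule (1%:M : 'M[F]_n).
split=> [|_ _ [x hx ->] [y hy ->]|a _ ha [x hx ->]].
- by exists 0; rewrite ?representation0.
- by exists (x + y); [apply: LD|rewrite fD].
- by exists (a *: x); [apply: LZ|rewrite fZ].
Qed.

Lemma representation_mx : exists U : 'M[F]_(n, k), [/\ integral_mx U,
  forall b, integral_mx b -> f b = b *m (U *m C)
  & (U *m C) *m G *m (U *m C)^T = G'].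
Proof.
case: frep => fL fD fZ fB.
have e_lat i : lattice v 1%:M (delta_mx 0 i : 'rV[F]_n).
  by apply/lattice1 => i' l; rewrite mxE; case: (_ && _); rewrite ?vring0 ?vring1.
have /fin_all_exists2 [u hu fu] : forall i,
    exists2 u : 'rV_k, integral_mx u & f (delta_mx 0 i) = u *m C.
  by move=> i; apply/latticeP/fL.
pose U : 'M[F]_(n, k) := \matrix_i u i.
have rowX i : row i (U *m C) = f (delta_mx 0 i) by rewrite row_mul rowK fu.
have fX b : integral_mx b -> f b = b *m (U *m C).
  move=> hb; rewrite [in LHS](row_sum_delta b) mulmx_sum_row.
  suff [] : lattice v 1%:M (\sum_i b 0 i *: delta_mx 0 i) /\
    f (\sum_i b 0 i *: delta_mx 0 i) = \sum_i b 0 i *: row i (U *m C) by [].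
  have [L0 LD LZ] := lattice_rsubmodule (1%:M : 'M[F]_n).
  apply: (big_ind2 (fun x y => lattice v 1%:M x /\ f x = y)).
  - by rewrite representation0.
  - by move=> x1 x2 y1 y2 [lx <-] [ly <-]; rewrite -fD //; split=> //; apply: LD.
  - by move=> i _; rewrite rowX -fZ //; split=> //; apply: LZ.
exists U; split => //; first by move=> i l; rewrite mxE; apply: hu.
apply/matrixP => i l; rewrite entry_bform !rowX fB // /bform -rowE trmx_delta -colE.
by rewrite !mxE.
Qed.

End Representation.

Lemma gram_scalar_kernel p m (X : 'M[F]_(p, m)) (G : 'M[F]_m) c (u : 'rV[F]_p) :
  c != 0 -> X *m G *m X^T = c%:M -> u *m X = 0 -> u = 0.
Proof.
move=> c0 XGX uX0; have : u *m (X *m G *m X^T) = 0 by rewrite !mulmxA uX0 !mul0mx.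
by rewrite XGX mul_mx_scalar => /eqP; rewrite scaler_eq0 (negbTE c0) => /eqP.
Qed.

(* Primitivity of the representation b |-> b X of R^n, read modulo pi. *)
Definition pi_saturated p m k (X : 'M[F]_(p, m)) (C : 'M[F]_(k, m)) :=
  forall a : 'rV_p, integral_mx a -> forall z, lattice v C z -> a *m X = pi *: z ->
    exists2 b, integral_mx b & a = pi *: b.

Lemma scalar_lattice_integral n t : integral_lattice v ((pi ^+ t)%:M : 'M[F]_n) 1%:M.
Proof.
move=> x y /lattice1 hx /lattice1 hy; rewrite /bform mul_mx_scalar -scalemxAl mxE.
by apply: vringM; [apply: vring_piX|apply: integral_mxM => // i l; rewrite mxE].
Qed.

Lemma prim_rep_scalar_piX n m (G : 'M[F]_m) k (C : 'M[F]_(k, m)) t :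
  prim_n_universal v n G C -> exists U : 'M[F]_(n, k), [/\ integral_mx U,
    (U *m C) *m G *m (U *m C)^T = (pi ^+ t)%:M & pi_saturated (U *m C) C].
Proof.
move=> Huniv; have sym : ((pi ^+ t)%:M : 'M[F]_n)^T = (pi ^+ t)%:M by rewrite tr_scalar_mx.
have rk : lrank (1%:M : 'M[F]_n) = n by rewrite /lrank mxrank1.
have [f [rep summand]] := Huniv n _ n 1%:M sym (@scalar_lattice_integral n t) rk.
have [U [hU fX XGX]] := representation_mx rep.
exists U; split => // a ha z hz eaz.
have Sfa : image_on (lattice v 1%:M) f (pi *: z) by exists a; [apply/lattice1|rewrite fX].
have [_ [x /lattice1 hx ->] e] :=
  direct_summand_scale (image_rsubmodule rep) summand vring_pi hz Sfa.
exists x => //; apply/eqP; rewrite -subr_eq0; apply/eqP.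
apply: (gram_scalar_kernel (expf_neq0 t pi0) XGX).
by rewrite mulmxBl -scalemxAl -(fX x hx) -e eaz subrr.
Qed.

Lemma gram_expand p m (G : 'M[F]_m) (X Z : 'M[F]_(p, m)) a :
  (X + a *: Z) *m G *m (X + a *: Z)^T =
  X *m G *m X^T + a *: (Z *m G *m X^T + X *m G *m Z^T + a *: (Z *m G *m Z^T)).
Proof.
rewrite linearD linearZ /= !mulmxDl !mulmxDr -!scalemxAl -!scalemxAr !scalerDr scalerA.
by rewrite -!addrA; congr (_ + _); rewrite addrCA.
Qed.

Lemma primitive_multiple p (a : 'rV[F]_p) : a != 0 ->
  exists c i0, integral_mx (c *: a) /\ (c *: a) 0 i0 = 1.
Proof.
move=> a0; have /existsP [i1 hi1] : [exists i, a 0 i != 0].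
  apply: contraNT a0 => /existsPn h; apply/eqP/rowP => i; rewrite mxE.
  by apply/eqP/negPn; apply: h.
have [i0 hi0 hmin] := @arg_minP _ _ _ i1 (fun i => a 0 i != 0) (fun i => v (a 0 i)) hi1.
exists (a 0 i0)^-1, i0; split; last by rewrite mxE mulVf.
move=> i'; rewrite (ord1 i') => i; rewrite mxE.
have [->|ai] := eqVneq (a 0 i) 0; first by rewrite mulr0 vring0.
apply/vringE; right; rewrite vM ?invr_neq0 // valuationV //.
by have := hmin i ai; rewrite addrC subr_ge0.
Qed.

Section IsotropicLimit.
Variables (n m : nat) (G : 'M[F]_m) (k : nat) (C : 'M[F]_(k, m)).
Hypothesis Hint : integral_lattice v G C.
Variable U : nat -> 'M[F]_(n, k).
Hypothesis U_integral : forall t, integral_mx (U t).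
Hypothesis U_gram : forall t, (U t *m C) *m G *m (U t *m C)^T = (pi ^+ t)%:M.
Hypothesis U_saturated : forall t, pi_saturated (U t *m C) C.
Variable w : 'M[F]_(n, k).
Hypothesis Uw : forall j N, exists t, (N <= t)%N /\ mx_eqmod j (U t) w.

Lemma gram_integral (P Q : 'M[F]_(n, k)) :
  integral_mx P -> integral_mx Q -> integral_mx ((P *m C) *m G *m (Q *m C)^T).
Proof.
move=> hP hQ i l; rewrite entry_bform !row_mul.
by apply: Hint; apply: lattice_mul; apply: integral_mx_row.
Qed.

Lemma limit_isotropic : (w *m C) *m G *m (w *m C)^T = 0.
Proof.
apply/matrixP => i l; rewrite [RHS]mxE; apply: vsmall_all_eq0 => j.
have [t [jt /mx_eqmod_decomp [R hR ->]]] := Uw j j.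
rewrite mulmxDl -scalemxAl gram_expand U_gram.
rewrite -(subnKC jt) exprD -scale_scalar_mx -scalerDr.
set D := _ + _; have hD : integral_mx D.
  apply: integral_mxD; first exact/integral_mx_scalar/vring_piX.
  by do ![apply: integral_mxD|apply: integral_mxZ; first exact: vring_piX|exact: gram_integral].
by rewrite mxE; apply/vsmall_piX; exists (D i l).
Qed.

Lemma limit_row_free : \rank (w *m C) = n.
Proof.
apply/eqP; change (row_free (w *m C)); rewrite -kermx_eq0.
apply/rowV0P => a /sub_kermxP aY.
have [//|a0] := eqVneq a 0; exfalso.
have [c [i0 [ha a1]]] := primitive_multiple a0.
have : (c *: a) *m (w *m C) = 0 by rewrite -scalemxAl aY scaler0.
move: (c *: a) ha a1 => a' ha' a'1 a'Y.
have [t [_ /mx_eqmod_decomp [R hR ew]]] := Uw 1 0.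
have : a' *m (U t *m C) = pi *: (- (a' *m R) *m C).
  move: a'Y; rewrite ew mulmxDl mulmxDr -scalemxAl -scalemxAr expr1 => /eqP.
  by rewrite addr_eq0 => /eqP ->; rewrite mulNmx scalerN mulmxA.
have hz := lattice_mul C (integral_mxN (integral_mxM ha' hR)).
case/(U_saturated ha' hz) => b hb /rowP/(_ i0); rewrite a'1 mxE => e.
by have := pi_mul_neq1 (hb 0 i0); rewrite -e eqxx.
Qed.

End IsotropicLimit.

Lemma isotropic_sublattice (Hres : finite_residue_field v) (Hcomp : vcomplete v)
    n m (G : 'M[F]_m) k (C : 'M[F]_(k, m)) :
  integral_lattice v G C -> prim_n_universal v n G C ->
  exists Y : 'M[F]_(n, m), [/\ (Y <= C)%MS, Y *m G *m Y^T = 0 & \rank Y = n].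
Proof.
move=> Hint Huniv; have /choice [U HU] := fun t => prim_rep_scalar_piX t Huniv.
have U_integral t : integral_mx (U t) by case: (HU t).
have U_gram t : (U t *m C) *m G *m (U t *m C)^T = (pi ^+ t)%:M by case: (HU t).
have U_saturated t : pi_saturated (U t *m C) C by case: (HU t).
have [w Uw] := cluster_limit Hres Hcomp U_integral.
exists (w *m C); split; first exact: submxMl.
- exact: (limit_isotropic Hint U_integral U_gram Uw).
- exact: (limit_row_free U_saturated Uw).
Qed.

End Valuation.

Lemma witt_index_ge_rank (F : fieldType) m (G : 'M[F]_m) k (C : 'M[F]_(k, m))
    d (Y : 'M[F]_(d, m)) :
  (Y <= C)%MS -> Y *m G *m Y^T = 0 -> (\rank Y <= witt_index G C)%N.
Proof.
(* witt_index ranges over square matrices; <<Y>> is one with the row space of Y. *)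
move=> sYC YGY; have /submxP [P eY] : (<<Y>> <= Y)%MS by rewrite genmxE.
have := @leq_bigmax_cond _ (fun d : 'I_m.+1 => `[< exists W : 'M[F]_m,
  [/\ (W <= C)%MS, W *m G *m W^T = 0 & \rank W = d] >]) (fun d => nat_of_ord d)
  (inord (\rank Y)).
rewrite inordK ?ltnS ?rank_leq_col //; apply; apply/asboolP.
exists <<Y>>%MS; split; rewrite ?genmxE ?inordK ?ltnS ?rank_leq_col //.
have -> : <<Y>>%MS *m G *m <<Y>>%MS^T = P *m (Y *m G *m Y^T) *m P^T.
  by rewrite eY trmx_mul !mulmxA.
by rewrite YGY mulmx0 mul0mx.
Qed.

Lemma isotropic_rank_bound (F : fieldType) m (G : 'M[F]_m) k (C : 'M[F]_(k, m))
    d (W : 'M[F]_(d, m)) :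
  nondeg_lattice G C -> (W <= C)%MS -> W *m G *m W^T = 0 -> (2 * \rank W <= \rank C)%N.
Proof.
move=> Hnd sWC WGW.
set C' := row_base C; have eC := eq_row_base C; have fC := row_base_free C.
set K := C' *m G *m C'^T.
(* K is invertible by nondegeneracy, and w K lies in the left kernel of w^T. *)
have fK : row_free K.
  rewrite -kermx_eq0; apply/rowV0P => u /sub_kermxP uK.
  have : u *m C' = 0.
    apply: Hnd; first by rewrite -eC submxMl.
    move=> y; rewrite -eC => /submxP [y' ->].
    have -> : bform G (u *m C') (y' *m C') = (u *m K *m y'^T) 0 0.
      by rewrite /bform /K trmx_mul !mulmxA.
    by rewrite uK mul0mx mxE.
  by move/eqP; rewrite mulmx_free_eq0 // => /eqP.
set w := W *m pinvmx C'.
have eW : W = w *m C' by rewrite /w mulmxKpV // eC.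
have wKw : w *m K *m w^T = 0 by move: WGW; rewrite eW trmx_mul /K !mulmxA.
have := mxrankS (introT sub_kermxP wKw : (w *m K <= kermx w^T)%MS).
rewrite mxrankMfree // mxrank_ker mxrank_tr eW.
have := rank_leq_col w; have := mxrankM_maxl w C'; lia.
Qed.

Theorem theorem2p6 (F : fieldType) (v : F -> int)
  (Hloc : nonarch_local_field v) (Hchar : (2%:R : F) != 0)
  (n m : nat) (G : 'M[F]_m) (HG : G^T = G) (k : nat) (C : 'M[F]_(k, m))
  (Hint : integral_lattice v G C) (Hnd : nondeg_lattice G C)
  (Huniv : prim_n_universal v n G C) :
  (n <= witt_index G C)%N /\ (2 * n <= lrank C)%N.
Proof.
case: Hloc => [[vM vD [pi [pi0 vpi]]] Hcomp Hres].
have [Y [sYC YGY rY]] := isotropic_sublattice vM vD pi0 vpi Hres Hcomp Hint Huniv.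
split; rewrite -rY; first exact: witt_index_ge_rank sYC YGY.
exact: isotropic_rank_bound Hnd sYC YGY.
Qed.
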